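(* Let $(X,\rho)$ be a complete metric space, $D\subset X$ a closed subset, and $f:D\to\mathbb{R}$ a lower semicontinuous function. Define the set-valued map $L_f:\mathbb{R}\rightrightarrows D$ by $L_f(r)=[f\le r]\cup\partial D$, where $[f\le r]=\{x\in D: f(x)\le r\}$. Then $L_f$ is outer semicontinuous. Moreover, for $\bar r\in f(D)$, $L_f$ is continuous at $\bar r$ if and only if there is no $x\in\operatorname{int}(D)$ such that $f(x)=\bar r$ and $x$ is a local minimizer of $f$.
   Context: For a sequence of sets $C_\nu$ in a metric space, the outer limit $\limsup_\nu C_\nu$ is the set of all cluster points of sequences $x_\nu\in C_\nu$, and the inner limit $\liminf_\nu C_\nu$ is the set of all limits of sequences $x_\nu\in C_\nu$ (for $\nu$ large). For a set-valued map $S$, $\limsup_{x\to\bar x}S(x)$ is the union of $\limsup_\nu S(x_\nu)$ over all sequences $x_\nu\to\bar x$, and $\liminf_{x\to\bar x}S(x)$ is the intersection of $\liminf_\nu S(x_\nu)$ over all sequences $x_\nu\to\bar x$. $S$ is outer semicontinuous at $\bar x$ if $\limsup_{x\to\bar x}S(x)\subset S(\bar x)$, inner semicontinuous at $\bar x$ if $\liminf_{x\to\bar x}S(x)\supset S(\bar x)$, and continuous at $\bar x$ if both hold; outer semicontinuous means outer semicontinuous at every point. $\operatorname{int}(D)$ and $\partial D$ denote interior and boundary of $D$ in $X$. *)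

From Stdlib Require Export Reals.
Open Scope R_scope.

Section MS.
Variable M : Metric_Space.
Let X := Base M.
Let d := dist M.

Definition ms_seq_conv (u : nat -> X) (l : X) : Prop :=
  forall eps, eps > 0 -> exists N, forall n, (n >= N)%nat -> d (u n) l < eps.

Definition ms_seq_cauchy (u : nat -> X) : Prop :=
  forall eps, eps > 0 -> exists N, forall n m, (n >= N)%nat -> (m >= N)%nat ->
    d (u n) (u m) < eps.

Definition ms_complete_space : Prop :=
  forall u : nat -> X, ms_seq_cauchy u -> exists l, ms_seq_conv u l.

Definition ms_interior (D : X -> Prop) (x : X) : Prop :=
  exists eps, eps > 0 /\ forall y, d x y < eps -> D y.

Definition ms_closure (D : X -> Prop) (x : X) : Prop :=
  forall eps, eps > 0 -> exists y, D y /\ d x y < eps.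

Definition ms_closed_set (D : X -> Prop) : Prop :=
  forall x, ms_closure D x -> D x.

Definition ms_boundary (D : X -> Prop) (x : X) : Prop :=
  ms_closure D x /\ ~ ms_interior D x.

Definition ms_lsc_on (D : X -> Prop) (f : X -> R) : Prop :=
  forall x, D x -> forall eps, eps > 0 -> exists delta, delta > 0 /\
    forall y, D y -> d x y < delta -> f x - eps < f y.

Definition ms_local_min (D : X -> Prop) (f : X -> R) (x : X) : Prop :=
  D x /\ exists eps, eps > 0 /\ forall y, D y -> d x y < eps -> f x <= f y.

Definition outer_lim_seq (C : nat -> X -> Prop) (x : X) : Prop :=
  exists (phi : nat -> nat) (y : nat -> X),
    (forall k, (phi k < phi (S k))%nat) /\
    (forall k, C (phi k) (y k)) /\ ms_seq_conv y x.

Definition inner_lim_seq (C : nat -> X -> Prop) (x : X) : Prop :=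
  exists (N : nat) (y : nat -> X),
    (forall n, (n >= N)%nat -> C n (y n)) /\ ms_seq_conv y x.

Definition outer_lim_map (S : R -> X -> Prop) (rbar : R) (x : X) : Prop :=
  exists r : nat -> R, Un_cv r rbar /\ outer_lim_seq (fun n => S (r n)) x.

Definition inner_lim_map (S : R -> X -> Prop) (rbar : R) (x : X) : Prop :=
  forall r : nat -> R, Un_cv r rbar -> inner_lim_seq (fun n => S (r n)) x.

Definition osc_at (S : R -> X -> Prop) (rbar : R) : Prop :=
  forall x, outer_lim_map S rbar x -> S rbar x.

Definition isc_at (S : R -> X -> Prop) (rbar : R) : Prop :=
  forall x, S rbar x -> inner_lim_map S rbar x.

Definition cont_at (S : R -> X -> Prop) (rbar : R) : Prop :=
  osc_at S rbar /\ isc_at S rbar.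

Definition osc (S : R -> X -> Prop) : Prop := forall rbar, osc_at S rbar.

Definition Lf (D : X -> Prop) (f : X -> R) (r : R) (x : X) : Prop :=
  (D x /\ f x <= r) \/ ms_boundary D x.

End MS.

(* Outer semicontinuity: let y_k in L_f(r_(phi k)) converge to x, r -> rbar.
   Since bd D is closed, either x is in bd D, or x keeps a positive distance
   from bd D; then the tail of (y_k) lies in [f <= r_(phi k)], so x is in D
   (D closed) and f x <= rbar (lower semicontinuity).

   Inner semicontinuity at rbar: if x in L_f(rbar) is a boundary point or
   satisfies f x < rbar, the constant sequence x works; if x is an interior
   point with f x = rbar that is not a local minimizer, points z arbitrarily
   close to x with f z < rbar lie in L_f(r_n) for n large, and a diagonal
   choice (lemma [inner_lim_seq_of_approx]) gives the required sequence.
   Conversely, at an interior local minimizer x with f x = rbar, the levels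
   r_n = rbar - 1/(n+1) give sets L_f(r_n) that miss a whole ball around x. *)

From Stdlib Require Import Reals.
From Stdlib Require Import Lra Lia Classical ClassicalEpsilon.
Open Scope R_scope.

Section MetricFacts.
Variable M : Metric_Space.
Let X := Base M.

Lemma dist_self (x : X) : dist M x x = 0.
Proof. apply dist_refl; reflexivity. Qed.

Lemma interior_near_interior (D : X -> Prop) (x y : X) (e : R) :
  e > 0 -> (forall z, dist M x z < e -> D z) -> dist M x y < e -> ms_interior M D y.
Proof.
  intros He Hball Hxy.
  exists (e - dist M x y); split; [lra|].
  intros z Hz. apply Hball. pose proof (dist_tri M x z y). lra.
Qed.

Lemma boundary_closed (D : X -> Prop) (x : X) :
  ms_closure M (ms_boundary M D) x -> ms_boundary M D x.
Proof.
  intros Hc; split.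
  - intros eps Heps.
    destruct (Hc (eps/2)) as [b [[Hb _] Hxb]]; [lra|].
    destruct (Hb (eps/2)) as [y [Hy Hby]]; [lra|].
    exists y; split; [exact Hy|].
    pose proof (dist_tri M x y b); lra.
  - intros [e [He Hint]].
    destruct (Hc (e/2)) as [b [[_ Hb] Hxb]]; [lra|].
    apply Hb. apply (interior_near_interior D x b e); [lra|exact Hint|lra].
Qed.

Lemma away_from_closure (A : X -> Prop) (x : X) :
  ~ ms_closure M A x -> exists eps, eps > 0 /\ forall b, A b -> eps <= dist M x b.
Proof.
  intros Hx. apply NNPP; intro Hn. apply Hx; intros eps Heps.
  apply NNPP; intro Hno. apply Hn; exists eps; split; [exact Heps|].
  intros b Hb. apply Rnot_lt_le; intro Hlt. apply Hno; exists b; auto.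
Qed.

Lemma closed_seq_limit (D : X -> Prop) (y : nat -> X) (x : X) (K : nat) :
  ms_closed_set M D -> (forall k, (k >= K)%nat -> D (y k)) ->
  ms_seq_conv M y x -> D x.
Proof.
  intros HD Hy Hconv. apply HD; intros eps Heps.
  destruct (Hconv eps Heps) as [N HN].
  exists (y (max K N)); split.
  - apply Hy; lia.
  - rewrite dist_sym; apply HN; lia.
Qed.

Lemma lsc_seq_bound (D : X -> Prop) (f : X -> R) (y : nat -> X) (s : nat -> R)
    (x : X) (l : R) (K : nat) :
  ms_lsc_on M D f -> D x ->
  (forall k, (k >= K)%nat -> D (y k) /\ f (y k) <= s k) ->
  ms_seq_conv M y x -> Un_cv s l -> f x <= l.
Proof.
  intros Hf HxD Hy Hconv Hs.
  apply Rnot_lt_le; intro Hlt.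
  set (e := (f x - l) / 2).
  assert (He : e > 0) by (unfold e; lra).
  destruct (Hf x HxD e He) as [delta [Hdelta Hnear]].
  destruct (Hconv delta Hdelta) as [N1 HN1].
  destruct (Hs e He) as [N2 HN2].
  set (k := max K (max N1 N2)).
  destruct (Hy k ltac:(unfold k; lia)) as [HyD Hfy].
  assert (Hfk := Hnear (y k) HyD ltac:(rewrite dist_sym; apply HN1; unfold k; lia)).
  assert (Hsk := HN2 k ltac:(unfold k; lia)).
  unfold R_dist in Hsk. apply Rabs_def2 in Hsk.
  unfold e in *; lra.
Qed.

Lemma nested_choice (P : nat -> X -> Prop) (a : X) :
  (forall k z, P (S k) z -> P k z) ->
  forall n, exists y, forall k, (k <= n)%nat -> (exists z, P k z) -> P k y.
Proof.
  intros Hdec.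
  assert (Hdown : forall k m z, (k <= m)%nat -> P m z -> P k z).
  { intros k m z Hkm; induction Hkm; auto. }
  induction n as [|n [y Hy]].
  - destruct (classic (exists z, P 0%nat z)) as [[z Hz]|Hn].
    + exists z; intros k Hk _. replace k with 0%nat by lia; exact Hz.
    + exists a; intros k Hk Hex. replace k with 0%nat in Hex by lia; contradiction.
  - destruct (classic (exists z, P (S n) z)) as [[z Hz]|Hn].
    + exists z; intros k Hk _. exact (Hdown k (S n) z Hk Hz).
    + exists y; intros k Hk Hex.
      destruct (Nat.eq_dec k (S n)) as [->|Hne]; [contradiction|].
      apply Hy; [lia|exact Hex].
Qed.

Lemma inv_succ_pos (k : nat) : 0 < / (INR k + 1).
Proof. apply Rinv_0_lt_compat; pose proof (pos_INR k); lra. Qed.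

Lemma inv_succ_le (k m : nat) : (k <= m)%nat -> / (INR m + 1) <= / (INR k + 1).
Proof.
  intros Hkm. apply Rinv_le_contravar; [pose proof (pos_INR k); lra|].
  apply le_INR in Hkm; lra.
Qed.

Lemma inner_lim_seq_of_approx (C : nat -> X -> Prop) (x : X) :
  (forall eps, eps > 0 ->
     exists N, forall n, (n >= N)%nat -> exists y, C n y /\ dist M x y < eps) ->
  inner_lim_seq M C x.
Proof.
  intros Happrox.
  set (P := fun n k y => C n y /\ dist M x y < / (INR k + 1)).
  assert (Hchoice : forall n, exists y,
             forall k, (k <= n)%nat -> (exists z, P n k z) -> P n k y).
  { intro n. apply (nested_choice (P n) x).
    intros k z [Hz Hdz]; split; [exact Hz|].
    eapply Rlt_le_trans; [exact Hdz|apply inv_succ_le; lia]. }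
  set (y := fun n => proj1_sig (constructive_indefinite_description _ (Hchoice n))).
  assert (Hy : forall n k, (k <= n)%nat -> (exists z, P n k z) -> P n k (y n)).
  { intros n. exact (proj2_sig (constructive_indefinite_description _ (Hchoice n))). }
  destruct (Happrox 1 ltac:(lra)) as [N0 HN0].
  exists N0, y; split.
  - intros n Hn. apply (Hy n 0%nat); [lia|].
    destruct (HN0 n Hn) as [z [Hz Hdz]]; exists z; split; [exact Hz|].
    simpl; lra.
  - intros eps Heps.
    destruct (archimed_cor1 eps Heps) as [k [Hk Hkpos]].
    destruct (Happrox _ (inv_succ_pos k)) as [Nk HNk].
    exists (max Nk k); intros n Hn.
    destruct (Hy n k ltac:(lia) (HNk n ltac:(lia))) as [_ Hd].
    rewrite dist_sym.
    eapply Rlt_trans; [exact Hd|].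
    eapply Rle_lt_trans; [|exact Hk].
    apply Rinv_le_contravar; [apply lt_0_INR; lia|lra].
Qed.

End MetricFacts.

Lemma strict_incr_ge (phi : nat -> nat) :
  (forall k, (phi k < phi (S k))%nat) -> forall k, (k <= phi k)%nat.
Proof. intros H k; induction k; [lia|]. specialize (H k); lia. Qed.

Lemma Un_cv_subseq (r : nat -> R) (l : R) (phi : nat -> nat) :
  (forall k, (phi k < phi (S k))%nat) -> Un_cv r l -> Un_cv (fun k => r (phi k)) l.
Proof.
  intros Hphi Hr eps Heps. destruct (Hr eps Heps) as [N HN].
  exists N; intros k Hk. apply HN. pose proof (strict_incr_ge phi Hphi k); lia.
Qed.

Lemma Un_cv_lower_levels (rbar : R) : Un_cv (fun n => rbar - / (INR n + 1)) rbar.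
Proof.
  intros eps Heps. destruct (RinvN_cv Heps) as [N HN].
  exists N; intros n Hn. specialize (HN n Hn).
  unfold R_dist in *; simpl in HN.
  replace (rbar - / (INR n + 1) - rbar) with (- (/ (INR n + 1) - 0)) by ring.
  rewrite Rabs_Ropp; exact HN.
Qed.

Section LevelMap.
Variable M : Metric_Space.
Variable D : Base M -> Prop.
Variable f : Base M -> R.
Hypothesis D_closed : ms_closed_set M D.
Hypothesis f_lsc : ms_lsc_on M D f.

Lemma Lf_osc : osc M (Lf M D f).
Proof.
  intros rbar x [r [Hr [phi [y [Hphi [Hy Hconv]]]]]].
  destruct (classic (ms_closure M (ms_boundary M D) x)) as [Hb|Hb].
  { right; apply boundary_closed; exact Hb. }
  destruct (away_from_closure M _ x Hb) as [eps0 [He0 Hfar]].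
  destruct (Hconv eps0 He0) as [K HK].
  (* the tail of (y_k) avoids bd D, hence lies in the sublevel sets *)
  assert (Htail : forall k, (k >= K)%nat -> D (y k) /\ f (y k) <= r (phi k)).
  { intros k Hk. destruct (Hy k) as [Hlev|Hbd]; [exact Hlev|].
    specialize (Hfar _ Hbd). specialize (HK k Hk). rewrite dist_sym in HK. lra. }
  assert (HxD : D x).
  { apply (closed_seq_limit M D y x K D_closed); [|exact Hconv].
    intros k Hk; apply Htail, Hk. }
  left; split; [exact HxD|].
  exact (lsc_seq_bound M D f y (fun k => r (phi k)) x rbar K f_lsc HxD Htail Hconv
           (Un_cv_subseq r rbar phi Hphi Hr)).
Qed.

(* At an interior local minimizer x with value rbar, L_f fails to be inner
   semicontinuous: the lower levels rbar - 1/(n+1) miss a ball around x. *)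
Lemma Lf_not_isc_at_interior_min (x : Base M) :
  ms_interior M D x -> ms_local_min M D f x -> ~ isc_at M (Lf M D f) (f x).
Proof.
  intros [e1 [He1 Hint]] [HxD [e2 [He2 Hmin]]] Hisc.
  set (r := fun n : nat => f x - / (INR n + 1)).
  assert (HL : Lf M D f (f x) x) by (left; split; [exact HxD|lra]).
  destruct (Hisc x HL r (Un_cv_lower_levels (f x))) as [N [y [Hy Hconv]]].
  destruct (Hconv (Rmin e1 e2)) as [K HK]; [apply Rmin_glb_lt; lra|].
  set (n := max N K).
  assert (Hd := HK n ltac:(unfold n; lia)). rewrite dist_sym in Hd.
  pose proof (Rmin_l e1 e2); pose proof (Rmin_r e1 e2).
  destruct (Hy n ltac:(unfold n; lia)) as [[HyD Hfy]|[_ Hnint]].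
  - pose proof (Hmin (y n) HyD ltac:(lra)). pose proof (inv_succ_pos n).
    unfold r in Hfy; lra.
  - apply Hnint. apply (interior_near_interior M D x (y n) e1); [lra|exact Hint|lra].
Qed.

Lemma Lf_approx_strict (rbar : R) (x : Base M) :
  ~ (exists z, ms_interior M D z /\ f z = rbar /\ ms_local_min M D f z) ->
  Lf M D f rbar x ->
  ms_boundary M D x \/
  forall eps, eps > 0 -> exists z, D z /\ f z < rbar /\ dist M x z < eps.
Proof.
  intros Hno [[HxD Hfx]|Hbd]; [|left; exact Hbd].
  destruct (classic (ms_interior M D x)) as [Hi|Hni].
  - right; intros eps Heps.
    destruct (Rle_lt_or_eq_dec _ _ Hfx) as [Hlt|Heq].
    + exists x; rewrite dist_self; repeat split; assumption.
    + apply NNPP; intro Hn. apply Hno. exists x; split; [exact Hi|split; [exact Heq|]].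
      split; [exact HxD|]. exists eps; split; [exact Heps|].
      intros z Hz Hdz. apply Rnot_lt_le; intro Hlt. apply Hn; exists z; repeat split; [exact Hz|lra|exact Hdz].
  - left; split; [|exact Hni].
    intros e He; exists x; rewrite dist_self; split; assumption.
Qed.

Lemma Lf_isc_of_no_interior_min (rbar : R) :
  ~ (exists z, ms_interior M D z /\ f z = rbar /\ ms_local_min M D f z) ->
  isc_at M (Lf M D f) rbar.
Proof.
  intros Hno x Hx r Hr. apply inner_lim_seq_of_approx; intros eps Heps.
  destruct (Lf_approx_strict rbar x Hno Hx) as [Hbd|Happrox].
  - exists 0%nat; intros n _; exists x; rewrite dist_self; split; [right|]; auto.
  - destruct (Happrox eps Heps) as [z [HzD [Hfz Hdz]]].
    destruct (Hr (rbar - f z)) as [N HN]; [lra|].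
    exists N; intros n Hn; exists z; split; [left; split; [exact HzD|]|exact Hdz].
    specialize (HN n Hn). unfold R_dist in HN. apply Rabs_def2 in HN. lra.
Qed.

End LevelMap.

Theorem mainTheorem1 (M : Metric_Space) (D : Base M -> Prop) (f : Base M -> R) :
  ms_complete_space M -> ms_closed_set M D -> ms_lsc_on M D f ->
  osc M (Lf M D f) /\
  (forall rbar : R, (exists x, D x /\ f x = rbar) ->
     (cont_at M (Lf M D f) rbar <->
      ~ (exists x, ms_interior M D x /\ f x = rbar /\ ms_local_min M D f x))).
Proof.
  intros _ HD Hf.
  split; [exact (Lf_osc M D f HD Hf)|].
  intros rbar _; split.
  - intros [_ Hisc] [x [Hint [<- Hmin]]].
    exact (Lf_not_isc_at_interior_min M D f x Hint Hmin Hisc).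
  - intros Hno. split; [apply Lf_osc; assumption|].
    exact (Lf_isc_of_no_interior_min M D f rbar Hno).
Qed.
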